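(* Under the standing assumptions below, let $\{x_n\}\subset X$ and $\{G_n\}\subset\mathcal{L}(X,Y)$ be sequences with $x_n\to x$ in $X$ for some $x\in X$, $G_n\in\partial_B^{sw}S(x_n)$ for all $n\in\mathbb{N}$, and $G_n\to G$ in the weak operator topology of $\mathcal{L}(X,Y)$ for some $G\in\mathcal{L}(X,Y)$. Then $G\in\partial_B^{sw}S(x)$.
   Context: Standing assumptions: $(\Omega,\Sigma,\mu)$ is a complete measure space with real Lebesgue spaces $L^p(\Omega)$, $p\in[1,\infty]$. $Y$ is a real separable reflexive Banach space with $Y\subset L^q(\Omega)$ and the inclusion $Y\hookrightarrow L^q(\Omega)$ continuous and compact, for a fixed $q\in[1,\infty]$. $X$ is a real separable Banach space. $U$ is a real reflexive Banach space with $U\subset X$ and the inclusion $U\hookrightarrow X$ continuous and compact. The map $S:X\to Y$ satisfies $S(\lambda x_1+(1-\lambda)x_2)\le\lambda S(x_1)+(1-\lambda)S(x_2)$ $\mu$-a.e. in $\Omega$ for all $x_1,x_2\in X$, $\lambda\in[0,1]$; and there is an exponent $r\in[1,\infty]$ such that for every $x\in X$ there are $C,\varepsilon>0$ with $\|S(x_1)-S(x_2)\|_Y\le C\|x_1-x_2\|_X$ for all $x_1,x_2\in X$ with $\|x_i-x\|_X\le\varepsilon$, $i=1,2$, and $\|S(x_1+z)-S(x_1)\|_{L^r(\Omega)}\le C\|z\|_U$ for all $x_1\in X$, $z\in U$ with $\|x_1-x\|_X\le\varepsilon$, $\|z\|_U\le\varepsilon$. $S$ is Gâteaux differentiable at $x\in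 X$ if for all $z\in X$ the limit $S'(x;z):=\lim_{t\to0^+}(S(x+tz)-S(x))/t$ exists in $Y$ and $z\mapsto S'(x;z)$ is linear and continuous; then $S'(x):=S'(x;\cdot)\in\mathcal{L}(X,Y)$. $\mathcal{D}_S$ denotes the set of points where $S$ is Gâteaux differentiable (it is known to be dense in $X$). WOT convergence $G_n\to G$ in $\mathcal{L}(X,Y)$ means $G_nz\rightharpoonup Gz$ weakly in $Y$ for all $z\in X$. The strong-weak Bouligand differential is $\partial_B^{sw}S(x):=\{G\in\mathcal{L}(X,Y): \exists\{x_n\}\subset\mathcal{D}_S \text{ with } x_n\to x \text{ in } X \text{ and } S'(x_n)\to G \text{ in the WOT}\}$. *)

From HB Require Import structures.
From mathcomp Require Import all_boot all_order all_algebra.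
From mathcomp Require Import all_classical all_reals all_analysis.

Set Implicit Arguments.
Unset Strict Implicit.
Unset Printing Implicit Defensive.
Import Order.TTheory GRing.Theory Num.Theory.
Import numFieldNormedType.Exports.
Local Open Scope classical_set_scope.
Local Open Scope ring_scope.

Definition is_linear (R : realType) (V W : normedModType R) (f : V -> W) :=
  forall (a : R) (u v : V), f (a *: u + v) = a *: f u + f v.

Definition is_bdd_linear (R : realType) (V W : normedModType R) (f : V -> W) :=
  is_linear f /\ continuous f.

Definition is_dual (R : realType) (V : normedModType R) (f : V -> R) :=
  (forall (a : R) (u v : V), f (a *: u + v) = a * f u + f v) /\ continuous f.

Definition separable_space (R : realType) (V : normedModType R) :=
  exists D : set V, countable D /\ dense D.

(* Reflexive: every bounded linear functional on V* (V* carrying the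
   operator norm) is the evaluation at some v in V, i.e. the canonical
   embedding V -> V** is onto.  "Phi bounded w.r.t. the operator norm"
   is written out as: |Phi f| <= C * M whenever M bounds f, i.e.
   |f v| <= M |v| for all v. *)
Definition reflexive_space (R : realType) (V : normedModType R) :=
  forall Phi : (V -> R) -> R,
    (forall (a : R) (f g : V -> R), is_dual f -> is_dual g ->
       Phi (fun v => a * f v + g v) = a * Phi f + Phi g) ->
    (exists C : R, forall (f : V -> R) (M : R), is_dual f ->
       (forall v, `|f v| <= M * `|v|) -> `|Phi f| <= C * M) ->
    exists v : V, forall f, is_dual f -> Phi f = f v.

Definition weak_cvg (R : realType) (V : normedModType R) (y : nat -> V) (l : V) :=
  forall f : V -> R, is_dual f -> (fun n => f (y n)) @ \oo --> f l.

Definition WOT_cvg (R : realType) (X Y : normedModType R)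
    (G : nat -> X -> Y) (G0 : X -> Y) :=
  forall z : X, weak_cvg (fun n => G n z) (G0 z).

Definition compact_embedding (R : realType) (U X : normedModType R) (iota : U -> X) :=
  [/\ is_linear iota, injective iota, continuous iota &
      compact (closure (iota @` [set u : U | `|u| <= 1]))].

(* Y is a subspace of L^q(Omega) (via iota, injective modulo a.e.
   equality), and the inclusion Y -> L^q is continuous and compact.
   Compactness is phrased sequentially (L^q is a (pseudo)metric space):
   every bounded sequence in Y has a subsequence converging in L^q. *)
Definition compact_Lq_embedding (R : realType) (d : measure_display)
    (Omega : measurableType d) (mu : {measure set Omega -> \bar R})
    (q : \bar R) (Y : normedModType R) (iota : Y -> Omega -> R) :=
  [/\ (forall (a : R) (u v : Y) (w : Omega), iota (a *: u + v) w = a * iota u w + iota v w),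
      (forall y, measurable_fun setT (iota y) /\ finite_norm mu q (iota y)),
      (forall y, {ae mu, forall w, iota y w = 0} -> y = 0),
      (exists C : R, forall y, ('N[mu]_q[EFin \o iota y] <= (C * `|y|)%:E)%E) &
      (forall (ys : nat -> Y) (M : R), (forall n, `|ys n| <= M) ->
        exists phi : nat -> nat,
          {homo phi : m n / (m < n)%N >-> (m < n)%N} /\
          exists g : Omega -> R, measurable_fun setT g /\ finite_norm mu q g /\
            (fun n => ('N[mu]_q[EFin \o (fun w => iota (ys (phi n)) w - g w)%R])%E) @ \oo --> 0%E)].

Definition ae_convex (R : realType) (d : measure_display)
    (Omega : measurableType d) (mu : {measure set Omega -> \bar R})
    (X Y : normedModType R) (iota : Y -> Omega -> R) (S : X -> Y) :=
  forall (x1 x2 : X) (l : R), 0 <= l <= 1 ->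
    {ae mu, forall w, iota (S (l *: x1 + (1 - l) *: x2)) w
                      <= l * iota (S x1) w + (1 - l) * iota (S x2) w}.

Definition local_lipschitz (R : realType) (d : measure_display)
    (Omega : measurableType d) (mu : {measure set Omega -> \bar R})
    (r : \bar R) (X Y U : normedModType R) (iotaY : Y -> Omega -> R)
    (iotaU : U -> X) (S : X -> Y) :=
  forall x : X, exists C eps : R, 0 < C /\ 0 < eps /\
    (forall x1 x2 : X, `|x1 - x| <= eps -> `|x2 - x| <= eps ->
        `|S x1 - S x2| <= C * `|x1 - x2|) /\
    (forall (x1 : X) (z : U), `|x1 - x| <= eps -> `|z| <= eps ->
        ('N[mu]_r[EFin \o (fun w => iotaY (S (x1 + iotaU z)) w - iotaY (S x1) w)%R]
           <= (C * `|z|)%:E)%E).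

Definition gateaux_derivative (R : realType) (X Y : normedModType R)
    (S : X -> Y) (x : X) (D : X -> Y) :=
  (forall z : X, (fun t : R => t^-1 *: (S (x + t *: z) - S x)) @ (0 : R)^'+ --> D z)
  /\ is_bdd_linear D.

Definition gateaux_differentiable (R : realType) (X Y : normedModType R)
    (S : X -> Y) (x : X) := exists D, gateaux_derivative S x D.

Definition bouligand_sw (R : realType) (X Y : normedModType R)
    (S : X -> Y) (x : X) (G : X -> Y) :=
  is_bdd_linear G /\
  exists (xs : nat -> X) (Ds : nat -> X -> Y),
    (forall n, gateaux_derivative S (xs n) (Ds n)) /\
    xs @ \oo --> x /\ WOT_cvg Ds G.

(* Diagonal argument.  For every n pick a point of Gateaux differentiability
   x'_n near x_n whose derivative is close to G_n on finitely many test
   data: the first n points of a dense sequence (e_j) of X, paired with the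
   first n functionals of a countable norming family (f_k) of Y^* (which
   exists by Hahn-Banach since Y is separable).  Then x'_n -> x and
   f_k (S'(x'_n) e_j) -> f_k (G e_j) for all j, k.  Near x the map S is
   C-Lipschitz, so the derivatives S'(x'_n) are eventually bounded by C;
   by density the convergence extends to f_k (S'(x'_n) z) for every z.
   Finally, in the reflexive space Y a bounded sequence converging against
   a separating family of functionals converges weakly: along any
   ultrafilter its weak limit exists, as an evaluation given by
   reflexivity, and it is pinned down by the separating family. *)

From HB Require Import structures.
From mathcomp Require Import all_boot all_order all_algebra.
From mathcomp Require Import all_classical all_reals all_analysis.
From mathcomp Require Import ring lra.
Import Order.TTheory GRing.Theory Num.Theory.
Import numFieldNormedType.Exports.
Local Open Scope classical_set_scope.
Local Open Scope ring_scope.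
Set Implicit Arguments.
Unset Strict Implicit.

Section LinearMaps.
Variables (R : realType) (V W : normedModType R) (f : V -> W).
Hypothesis f_linear : is_linear f.

Let fL : {linear V -> W} := HB.pack f (GRing.isLinear.Build _ _ _ _ f f_linear).

Lemma is_linearB u v : f (u - v) = f u - f v.
Proof. exact: (linearB fL). Qed.

Lemma is_linear_bounded : continuous f ->
  exists k : R, 0 < k /\ forall v, `|f v| <= k * `|v|.
Proof.
move=> f_cont; have : {for 0, continuous fL} by exact: f_cont.
move=> /(continuous_linear_bounded 0) /linear_boundedP [M [_ hM]].
exists (`|M| + 1); split; first by rewrite ltr_pwDr.
by apply: hM; rewrite (le_lt_trans (ler_norm M)) // ltrDl.
Qed.

Lemma bounded_is_bdd_linear (k : R) :
  (forall v, `|f v| <= k * `|v|) -> is_bdd_linear f.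
Proof.
move=> f_le; split => //; apply: (@bounded_linear_continuous _ _ _ fL).
apply/linear_boundedP; near=> r => v.
have k_le_r : k <= r by near: r; apply: nbhs_pinfty_ge; rewrite num_real.
by apply: (le_trans (f_le v)); rewrite ler_wpM2r.
Unshelve. all: by end_near.
Qed.

End LinearMaps.

Lemma is_linear_comp (R : realType) (U V W : normedModType R) (f : V -> W)
    (g : U -> V) : is_linear f -> is_linear g -> is_linear (f \o g).
Proof. by move=> f_lin g_lin a u v /=; rewrite g_lin f_lin. Qed.

Lemma is_bdd_linear_comp (R : realType) (U V W : normedModType R) (f : V -> W)
    (g : U -> V) : is_bdd_linear f -> is_bdd_linear g -> is_bdd_linear (f \o g).
Proof.
move=> [f_lin f_cont] [g_lin g_cont]; split; first exact: is_linear_comp.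
by move=> u; apply: continuous_comp; [exact: g_cont | exact: f_cont].
Qed.

Section NormingFunctional.
Variables (R : realType) (V : normedModType R) (y0 : V).

(* The last
   clause keeps the property stable under unions of chains (the empty chain
   included) while forcing every nonempty such graph to norm [y0]. *)
Definition dominated_graph (A : set (V * R)) :=
  [/\ (forall v a b, A (v, a) -> A (v, b) -> a = b),
      (forall (c : R) u v a b, A (u, a) -> A (v, b) -> A (c *: u + v, c * a + b)),
      (forall v a, A (v, a) -> a <= `|v|) &
      (A = set0 \/ A (y0, `|y0|))].

Lemma dominated_graph_bigcup (F : set (set (V * R))) :
  F `<=` dominated_graph -> total_on F subset ->
  dominated_graph (\bigcup_(A in F) A).
Proof.
move=> Fg tot; split.
- move=> v a b [A FA Aa] [B FB Bb].
  have [AB|BA] := tot _ _ FA FB.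
  + by have [h _ _ _] := Fg _ FB; apply: (h v); [apply: AB|].
  + by have [h _ _ _] := Fg _ FA; apply: (h v); [|apply: BA].
- move=> c u v a b [A FA Aa] [B FB Bb].
  have [AB|BA] := tot _ _ FA FB.
  + by exists B => //; have [_ h _ _] := Fg _ FB; apply: h => //; apply: AB.
  + by exists A => //; have [_ h _ _] := Fg _ FA; apply: h => //; apply: BA.
- by move=> v a [A FA Aa]; have [_ _ h _] := Fg _ FA; apply: h.
- have [[A FA Ay]|nex] := pselect (exists2 A, F A & A (y0, `|y0|)).
    by right; exists A.
  left; apply/seteqP; split => // p [A FA Ap].
  have [_ _ _ [A0|Ay]] := Fg _ FA; first by move: Ap; rewrite A0.
  by exfalso; apply: nex; exists A.
Qed.

Lemma dominated_graph_line :
  dominated_graph [set (c *: y0, c * `|y0|) | c in [set: R]].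
Proof.
split.
- move=> v a b [c _ [<- <-]] [c' _ [e <-]].
  have [->|y0_neq0] := eqVneq y0 0; first by rewrite normr0 !mulr0.
  have : (c - c') *: y0 = 0 by rewrite scalerBl e subrr.
  by move/eqP; rewrite scaler_eq0 (negbTE y0_neq0) orbF subr_eq0 => /eqP ->.
- move=> c u v a b [c1 _ [<- <-]] [c2 _ [<- <-]].
  by exists (c * c1 + c2) => //; rewrite scalerDl scalerA mulrDl mulrA.
- by move=> v a [c _ [<- <-]]; rewrite normrZ ler_wpM2r // ler_norm.
- by right; exists 1 => //; rewrite scale1r mul1r.
Qed.

Section DominatedGraphTheory.
Variable A : set (V * R).
Hypotheses (A_dom : dominated_graph A) (A_y0 : A (y0, `|y0|)).

Lemma dominated_graph0 : A (0, 0).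
Proof.
have [_ A_lin _ _] := A_dom.
by have := A_lin (-1) _ _ _ _ A_y0 A_y0; rewrite scaleN1r addNr mulN1r addNr.
Qed.

Lemma dominated_graphZ c u a : A (u, a) -> A (c *: u, c * a).
Proof.
have [_ A_lin _ _] := A_dom.
by move=> Aua; have := A_lin c _ _ _ _ Aua dominated_graph0; rewrite !addr0.
Qed.

(* Extension in the direction [v]: domination forces the value at [v] to lie
   between [sup E] and the bounds [E_ubound]; we take [c := sup E]. *)
Variable v : V.

Let E := [set p.2 - `|p.1 - v| | p in A].

Let E_ubound w b : A (w, b) -> ubound E (`|w + v| - b).
Proof.
move=> Awb _ [[u a] Aua <-] /=.
have [_ A_lin A_le _] := A_dom.
rewrite lerBrDr addrAC lerBlDr.
have := A_le _ _ (A_lin 1 _ _ _ _ Aua Awb); rewrite scale1r mul1r => /le_trans.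
apply; have -> : u + w = (u - v) + (w + v) by rewrite addrACA addNr addr0.
by rewrite addrC ler_normD.
Qed.

Let E_has_sup : has_sup E.
Proof.
split; first by exists (0 - `|0 - v|), (0, 0) => //; exact: dominated_graph0.
by exists (`|0 + v| - 0); apply: E_ubound dominated_graph0.
Qed.

Let c := sup E.

Let c_le w b : A (w, b) -> c <= `|w + v| - b.
Proof. by move=> Awb; apply: ge_sup (E_ubound Awb); case: E_has_sup. Qed.

Let c_ge u a : A (u, a) -> a - `|u - v| <= c.
Proof. by move=> Aua; apply: sup_upper_bound => //; exists (u, a). Qed.

Definition graph_extension :=
  [set q | exists u a (t : R), A (u, a) /\ q = (u + t *: v, a + t * c)].

Lemma sub_graph_extension : A `<=` graph_extension.
Proof. by case=> u a Aua; exists u, a, 0; rewrite scale0r mul0r !addr0. Qed.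

Lemma graph_extension_v : graph_extension (v, c).
Proof.
exists 0, 0, 1; rewrite scale1r mul1r !add0r; split => //.
exact: dominated_graph0.
Qed.

(* On the new line the bounds [c_le] and [c_ge], rescaled by [t], are
   exactly domination by the norm. *)
Lemma graph_extension_le u a t : A (u, a) -> a + t * c <= `|u + t *: v|.
Proof.
move=> Aua; have [_ _ A_le _] := A_dom.
have [->|t_neq0] := eqVneq t 0; first by rewrite scale0r mul0r !addr0 A_le.
have [t_gt0|t_le0] := ltP 0 t.
  have := c_le (dominated_graphZ t^-1 Aua).
  rewrite -(ler_pM2l t_gt0) mulrBr mulrA mulfV // mul1r.
  rewrite (_ : t * `|_| = `|u + t *: v|); first by rewrite lerBrDl addrC.
  by rewrite -{1}(gtr0_norm t_gt0) -normrZ scalerDr scalerA mulfV // scale1r.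
have t_lt0 : 0 < - t by rewrite oppr_gt0 lt_neqAle t_le0 t_neq0.
have := c_ge (dominated_graphZ (- t)^-1 Aua).
rewrite -(ler_pM2l t_lt0) mulrBr mulrA mulfV ?oppr_eq0 // mul1r.
rewrite (_ : - t * `|_| = `|u + t *: v|).
  by rewrite mulNr lerBlDr -lerBlDl opprK addrC.
rewrite -{1}(gtr0_norm t_lt0) -normrZ scalerBr scalerA mulfV ?oppr_eq0 //.
by rewrite scale1r scaleNr opprK.
Qed.

Lemma graph_extension_dominated :
  ~ (exists a, A (v, a)) -> dominated_graph graph_extension.
Proof.
move=> v_notin; have [A_fun A_lin A_le _] := A_dom; split.
- move=> w a1 a2 [u [a [t [Aua [-> ->]]]]] [u' [a' [t' [Aua' [e ->]]]]].
  have [tt'|t_neq_t'] := eqVneq t t'.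
    by rewrite -tt' in e *; move/addIr: e => e; rewrite (A_fun _ _ a' Aua) // e.
  exfalso; apply: v_notin; exists ((t - t')^-1 * (a' - a)).
  have -> : v = (t - t')^-1 *: (u' - u).
    apply: (@scalerI _ _ (t - t')); first by rewrite subr_eq0.
    rewrite scalerA mulfV ?subr_eq0 // scale1r scalerBl.
    by rewrite -[in RHS](addrK (t' *: v) u') -e [u + _]addrC addrAC addrK.
  apply: dominated_graphZ.
  by have := A_lin (-1) _ _ _ _ Aua Aua'; rewrite scaleN1r mulN1r !(addrC (- _)).
- move=> c0 w1 w2 b1 b2 [u [a [t [Aua [-> ->]]]]] [u' [a' [t' [Aua' [-> ->]]]]].
  exists (c0 *: u + u'), (c0 * a + a'), (c0 * t + t'); split; first exact: A_lin.
  by congr pair; [rewrite scalerDr scalerDl scalerA | rewrite mulrDr mulrDl mulrA];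
    rewrite addrACA.
- by move=> w b [u [a [t [Aua [-> ->]]]]]; exact: graph_extension_le.
- right; exact: sub_graph_extension.
Qed.
End DominatedGraphTheory.

Lemma maximal_dominated_graph_total A : dominated_graph A ->
  (forall B, A `<` B -> ~ dominated_graph B) ->
  A (y0, `|y0|) /\ forall v, exists a, A (v, a).
Proof.
move=> A_dom A_max.
have A_y0 : A (y0, `|y0|).
  have [_ _ _ [A0|//]] := A_dom.
  exfalso; apply: (A_max _ _ dominated_graph_line); rewrite A0; split => //.
  by move=> /(_ (y0, `|y0|)); apply; exists 1 => //; rewrite scale1r mul1r.
split => // v; apply: contrapT => v_notin.
apply: (A_max _ _ (graph_extension_dominated A_dom A_y0 v_notin)).
split; first exact: sub_graph_extension.
by move=> /(_ _ (graph_extension_v A_dom A_y0 v)) Av; apply: v_notin; eexists; exact: Av.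
Qed.

Lemma norming_functional : exists f : V -> R,
  [/\ (forall (a : R) u v, f (a *: u + v) = a * f u + f v),
      (forall v, `|f v| <= `|v|) & f y0 = `|y0|].
Proof.
have [A [A_dom A_max]] := Zorn_bigcup dominated_graph_bigcup.
have [A_y0 A_total] := maximal_dominated_graph_total A_dom A_max.
have [A_fun A_lin A_le _] := A_dom.
pose f v := xget 0 [set a | A (v, a)].
have Af v : A (v, f v) by exact: (xgetPex 0 (A_total v)).
exists f; split.
- by move=> a u v; apply: (A_fun (a *: u + v)); [exact: Af | exact: A_lin].
- move=> v; rewrite ler_norml A_le // andbT lerNl -normrN.
  by have := A_le _ _ (A_lin (-1) _ _ _ _ (Af v) (dominated_graph0 A_dom A_y0));
    rewrite scaleN1r mulN1r !addr0.
- exact: A_fun (Af y0) A_y0.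
Qed.

End NormingFunctional.

Section Separable.
Variables (R : realType) (V : normedModType R).
Hypothesis V_sep : separable_space V.

Lemma separable_dense_seq : exists e : nat -> V,
  forall (y : V) (r : R), 0 < r -> exists j, `|y - e j| < r.
Proof.
have [D [/pcard_surjP [e e_onto] D_dense]] := V_sep.
exists e => y r r_gt0.
have [z [yz Dz]] := D_dense (ball y r) (ex_intro _ y (ballxx y r_gt0)) (ball_open y r).
have [j _ ej] := e_onto z Dz.
by exists j; rewrite ej; move: yz; rewrite -ball_normE.
Qed.

Lemma separating_dual_seq : exists f : nat -> V -> R,
  [/\ (forall k, is_dual (f k)), (forall k v, `|f k v| <= `|v|) &
      (forall y, (forall k, f k y = 0) -> y = 0)].
Proof.
have [e e_dense] := separable_dense_seq.
have [f f_norming] := choice (fun k => norming_functional (e k)).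
exists f; split.
- move=> k; have [f_lin f_le _] := f_norming k.
  by apply: (bounded_is_bdd_linear f_lin (k := 1)) => v; rewrite mul1r.
- by move=> k v; have [_ f_le _] := f_norming k.
move=> y f_y; apply/eqP; apply: contraT => y_neq0.
have y_gt0 : 0 < `|y| by rewrite normr_gt0.
have [k yk] := e_dense y (`|y| / 2) (divr_gt0 y_gt0 (ltr0Sn _ 1)).
have [f_lin f_le f_ek] := f_norming k.
(* [f k] vanishes at [y] but norms [e k], which is closer to [y] than [|y|/2]. *)
have : `|e k| <= `|e k - y|.
  rewrite -f_ek -[f k (e k)]subr0 -(f_y k) -(is_linearB f_lin).
  exact: le_trans (ler_norm _) (f_le _).
have : `|y| <= `|e k| + `|y - e k| by rewrite -[X in `|X|](subrK (e k)) addrC ler_normD.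
by rewrite distrC in yk *; lra.
Qed.

End Separable.

Lemma cvg_ultra (T : Type) (Z : topologicalType) (F : set_system T)
    (s : T -> Z) (l : Z) : Filter F ->
  (forall U, UltraFilter U -> F `<=` U -> s @ U --> l) -> s @ F --> l.
Proof.
move=> F_filter s_ultra N Nl; apply: contrapT => sN_notin_F.
pose G := filter_from F (fun B => B `\` s @^-1` N).
have G_proper : ProperFilter G.
  apply: filter_from_proper.
    apply: filter_from_filter; first by exists setT; exact: filterT.
    move=> B C FB FC; exists (B `&` C); first exact: filterI.
    by move=> t [[Bt Ct] Nt].
  move=> B FB; apply: contrapT => /set0P/negP/negPn/eqP BN0.
  suff : F (s @^-1` N) by [].
  apply: filterS FB => t Bt; apply: contrapT => Nt.
  by have : (B `\` s @^-1` N) t by []; rewrite BN0.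
have [U [U_ultra GU]] := ultraFilterLemma G_proper.
have F_sub_U : F `<=` U by move=> B FB; apply: GU; exists B => // t [].
have UN : U (s @^-1` N) by exact: s_ultra U U_ultra F_sub_U N Nl.
have UNc : U (~` (s @^-1` N)).
  by apply: GU; exists setT; [exact: filterT | move=> t []].
have : U set0 by rewrite -(setICr (s @^-1` N)); exact: filterI.
exact: filter_not_empty.
Qed.

Lemma ultra_bounded_cvg (R : realType) (T : Type) (U : set_system T)
    (s : T -> R) (B : R) :
  UltraFilter U -> (\forall t \near U, `|s t| <= B) -> cvg (s @ U).
Proof.
move=> U_ultra s_bdd.
have sU_seg : (s @ U) `[- B, B]%classic.
  by apply: filterS s_bdd => t; rewrite /= in_itv /= -ler_norml.
have [p [_ p_cluster]] := segment_compact _ sU_seg.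
apply/cvg_ex; exists p => N Np.
have [//|sNc] := in_ultra_setVsetC (s @^-1` N) U_ultra.
by have [z []] := p_cluster (~` N) N sNc Np.
Qed.

Section Reflexive.
Variables (R : realType) (Y : normedModType R).
Hypothesis Y_refl : reflexive_space Y.

Lemma dual_bounded_near (T : Type) (U : set_system T) {U_filter : Filter U}
    (u : T -> Y) (B : R) (h : Y -> R) : is_dual h ->
  (\forall t \near U, `|u t| <= B) ->
  exists M, \forall t \near U, `|h (u t)| <= M.
Proof.
move=> [h_lin h_cont] u_bdd.
have [k [k_gt0 h_le]] := is_linear_bounded h_lin h_cont.
exists (k * B); apply: filterS u_bdd => t ut.
by apply: le_trans (h_le _) _; rewrite ler_pM2l.
Qed.

(* Along an ultrafilter, [h |-> lim h(u)] is a bounded linear functional on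
   the dual, hence an evaluation by reflexivity. *)
Lemma reflexive_ultra_weak_limit (T : Type) (U : set_system T) (u : T -> Y)
    (B : R) : UltraFilter U -> (\forall t \near U, `|u t| <= B) ->
  exists v, forall h, is_dual h -> (fun t => h (u t)) @ U --> h v.
Proof.
move=> U_ultra u_bdd.
(* In the zero space [reflexive_space] asks for the bound also with negative
   [M], so that case is settled directly. *)
have [[y1 y1_neq0]|Y_trivial] := pselect (exists y : Y, y != 0); last first.
  have Y0 (y : Y) : y = 0.
    by apply/eqP; apply: contrapT => /negP y_neq0; apply: Y_trivial; exists y.
  exists 0 => h _; rewrite (_ : (fun t => h (u t)) = fun=> h 0) ?funeqE => [|t].
    exact: cvg_cst.
  by rewrite (Y0 (u t)).
have hu_cvg h : is_dual h -> cvg ((fun t => h (u t)) @ U).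
  move=> h_dual; have [M hM] := dual_bounded_near h_dual u_bdd.
  exact: ultra_bounded_cvg U_ultra hM.
have [v hv] : exists v, forall h, is_dual h -> lim ((fun t => h (u t)) @ U) = h v.
  apply: Y_refl => [a h g h_dual g_dual|].
    by apply: cvg_lim => //; apply: cvgD; [apply: cvgM; [exact: cvg_cst|]|]; exact: hu_cvg.
  exists B => h M h_dual h_le.
  have M_ge0 : 0 <= M.
    rewrite -(@pmulr_lge0 _ `|y1|) ?normr_gt0 //.
    exact: le_trans (normr_ge0 _) (h_le y1).
  suff : [set r : R | r <= B * M] `|lim ((fun t => h (u t)) @ U)| by [].
  apply: (closed_cvg _ (@closed_le _ (B * M)) _ _ (cvg_norm (hu_cvg h h_dual))).
  apply: filterS u_bdd => t ut /=; apply: le_trans (h_le _) _.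
  by rewrite mulrC ler_wpM2r.
by exists v => h h_dual; rewrite -hv //; exact: hu_cvg.
Qed.

Lemma weak_cvg_separating (f : nat -> Y -> R) (u : nat -> Y) (u0 : Y) (B : R) :
  (forall k, is_dual (f k)) -> (forall y, (forall k, f k y = 0) -> y = 0) ->
  (\forall n \near \oo, `|u n| <= B) ->
  (forall k, (fun n => f k (u n)) @ \oo --> f k u0) -> weak_cvg u u0.
Proof.
move=> f_dual f_sep u_bdd fu_cvg g g_dual.
apply: cvg_ultra => U U_ultra oo_sub_U.
have [v hv] := reflexive_ultra_weak_limit U_ultra (oo_sub_U _ u_bdd).
suff -> : u0 = v by exact: hv.
apply/eqP; rewrite -subr_eq0; apply/eqP; apply: f_sep => k.
rewrite (is_linearB (f_dual k).1); apply/eqP; rewrite subr_eq0; apply/eqP.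
apply: (cvg_unique (@Rhausdorff R) _ (hv _ (f_dual k))).
by move=> N N_nbhs; apply: oo_sub_U; exact: (fu_cvg k N N_nbhs).
Qed.

End Reflexive.

Lemma cvg_near_seq (R : realType) (V : normedModType R) (u v : nat -> V) (l : V) :
  u @ \oo --> l -> (\forall n \near \oo, `|u n - v n| < n.+1%:R^-1) ->
  v @ \oo --> l.
Proof.
move=> /cvgrPdist_lt u_cvg uv_near; apply/cvgrPdist_lt => e e_gt0.
have e2_gt0 : 0 < e / 2 by rewrite divr_gt0.
have inv_lt := near_infty_natSinv_lt (PosNum e2_gt0).
near=> n.
have lu : `|l - u n| < e / 2 by near: n; exact: u_cvg.
have uv : `|u n - v n| < n.+1%:R^-1 by near: n.
have inv_n : n.+1%:R^-1 < e / 2 by near: n.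
apply: le_lt_trans (ler_distD (u n) _ _) _; rewrite [e]splitr.
by apply: ltrD => //; exact: lt_trans uv inv_n.
Unshelve. all: by end_near.
Qed.

Lemma diagonal_cvg (R : realType) (a : nat -> nat -> nat -> nat -> R)
    (b : nat -> nat -> nat -> R) (l : nat -> nat -> R) (Q : nat -> nat -> Prop) :
  (forall n, \forall m \near \oo, Q n m) ->
  (forall n j k, (fun m => a n m j k) @ \oo --> b n j k) ->
  (forall j k, (fun n => b n j k) @ \oo --> l j k) ->
  exists mm : nat -> nat, (forall n, Q n (mm n)) /\
    forall j k, (fun n => a n (mm n) j k) @ \oo --> l j k.
Proof.
move=> Q_near a_cvg b_cvg.
have m_near n : exists m, Q n m /\
    forall j k, (j <= n)%N -> (k <= n)%N -> `|b n j k - a n m j k| < n.+1%:R^-1.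
  have inv_gt0 : 0 < n.+1%:R^-1 :> R by rewrite invr_gt0.
  have : \forall m \near \oo, forall j k : 'I_n.+1,
      `|b n j k - a n m j k| < n.+1%:R^-1.
    apply: filter_forall => j; apply: filter_forall => k.
    by move/cvgrPdist_lt: (a_cvg n j k); apply.
  move=> /(filterI (Q_near n)) /filter_ex [m [Qm am]].
  exists m; split => // j k jn kn.
  exact: (am (Ordinal (jn : (j < n.+1)%N)) (Ordinal (kn : (k < n.+1)%N))).
have [mm hmm] := choice m_near.
exists mm; split => [n|j k]; first by case: (hmm n).
apply: cvg_near_seq (b_cvg j k) _.
exists (maxn j k) => // n /= jkn.
by apply: (hmm n).2; apply: leq_trans jkn; rewrite ?leq_maxl ?leq_maxr.
Qed.

Lemma equibounded_dense_cvg (R : realType) (V W : normedModType R)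
    (A : nat -> V -> W) (A0 : V -> W) (e : nat -> V) (C : R) :
  (forall (y : V) (r : R), 0 < r -> exists j, `|y - e j| < r) ->
  (forall n, is_linear (A n)) -> is_bdd_linear A0 ->
  (\forall n \near \oo, forall v, `|A n v| <= C * `|v|) ->
  (forall j, (fun n => A n (e j)) @ \oo --> A0 (e j)) ->
  forall v, (fun n => A n v) @ \oo --> A0 v.
Proof.
move=> e_dense A_lin [A0_lin A0_cont] A_le Ae_cvg v.
have [k [k_gt0 A0_le]] := is_linear_bounded A0_lin A0_cont.
apply/cvgrPdist_lt => eps eps_gt0.
have K_gt0 : 0 < k + `|C| by rewrite ltr_pwDl.
pose d := eps / (2 * (k + `|C|)).
have d_gt0 : 0 < d by rewrite divr_gt0 // mulr_gt0.
have Kd : (k + `|C|) * d = eps / 2.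
  by rewrite /d; field; rewrite gt_eqF.
have [j vj] := e_dense v d d_gt0.
have e2_gt0 : 0 < eps / 2 by rewrite divr_gt0.
near=> n.
have Ae : `|A0 (e j) - A n (e j)| < eps / 2.
  by near: n; move/cvgrPdist_lt: (Ae_cvg j); apply.
have An_le : `|A n (e j - v)| <= `|C| * d.
  have An_le : forall w, `|A n w| <= C * `|w| by near: n.
  apply: le_trans (An_le _) _; apply: le_trans (ler_wpM2r _ (ler_norm C)) _ => //.
  by rewrite ler_wpM2l // distrC ltW.
have A0_le' : `|A0 (v - e j)| <= k * d by apply: le_trans (A0_le _) _; rewrite ler_wpM2l ?ltW.
rewrite (is_linearB A0_lin) in A0_le'; rewrite (is_linearB (A_lin n)) in An_le.
have := ler_distD (A n (e j)) (A0 v) (A n v).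
have := ler_distD (A0 (e j)) (A0 v) (A n (e j)).
move: Kd; rewrite mulrDl; lra.
Unshelve. all: by end_near.
Qed.

Lemma gateaux_derivative_le (R : realType) (X Y : normedModType R) (S : X -> Y)
    (x x' : X) (D : X -> Y) (C eps : R) :
  (forall x1 x2 : X, `|x1 - x| <= eps -> `|x2 - x| <= eps ->
      `|S x1 - S x2| <= C * `|x1 - x2|) ->
  `|x' - x| < eps -> gateaux_derivative S x' D ->
  forall z, `|D z| <= C * `|z|.
Proof.
move=> S_lip x'_near [D_lim _] z.
pose t0 := (eps - `|x' - x|) / (`|z| + 1).
have t0_gt0 : 0 < t0 by rewrite divr_gt0 // ?subr_gt0 // ltr_pwDr.
apply: (closed_cvg _ (@closed_le _ (C * `|z|)) _ _ (cvg_norm (D_lim z))).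
near=> t.
have t_gt0 : 0 < t by near: t; exact: nbhs_right_gt.
have t_lt : t < t0 by near: t; exact: nbhs_right_lt.
(* For [0 < t < t0] both [x'] and [x' + t z] lie in the ball where [S] is
   [C]-Lipschitz. *)
have tz_le : t * `|z| <= eps - `|x' - x|.
  apply: le_trans (ltW (_ : t * (`|z| + 1) < _)).
    by apply: ler_wpM2l; [exact: ltW | rewrite lerDl].
  by rewrite -ltr_pdivlMr // ltr_pwDr.
rewrite /= normrZ gtr0_norm ?invr_gt0 // -ler_pdivlMl ?invr_gt0 // invrK.
apply: le_trans (S_lip _ _ _ _) _.
- rewrite addrAC; apply: le_trans (ler_normD _ _) _.
  by rewrite normrZ gtr0_norm //; lra.
- exact: ltW.
- by rewrite addrC addKr normrZ gtr0_norm // mulrCA.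
Unshelve. all: by end_near.
Qed.

Lemma bouligand_sw_diagonal (R : realType) (X Y : normedModType R) (S : X -> Y)
    (xs : nat -> X) (x : X) (Gs : nat -> X -> Y) (G : X -> Y)
    (e : nat -> X) (f : nat -> Y -> R) :
  (forall k, is_dual (f k)) -> xs @ \oo --> x ->
  (forall n, bouligand_sw S (xs n) (Gs n)) -> WOT_cvg Gs G ->
  exists (xs' : nat -> X) (Ds' : nat -> X -> Y),
    [/\ forall n, gateaux_derivative S (xs' n) (Ds' n), xs' @ \oo --> x &
        forall j k, (fun n => f k (Ds' n (e j))) @ \oo --> f k (G (e j))].
Proof.
move=> f_dual xs_cvg Gs_bouligand Gs_WOT.
have approx n : exists p : (nat -> X) * (nat -> X -> Y),
    [/\ forall m, gateaux_derivative S (p.1 m) (p.2 m), p.1 @ \oo --> xs n &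
        WOT_cvg p.2 (Gs n)].
  by have [_ [xn [Dn [? [? ?]]]]] := Gs_bouligand n; exists (xn, Dn).
have [P P_approx] := choice approx.
have Q_near n : \forall m \near \oo, `|xs n - (P n).1 m| < n.+1%:R^-1.
  by have [_ Pn_cvg _] := P_approx n; move/cvgrPdist_lt: Pn_cvg; apply.
have a_cvg n j k : (fun m => f k ((P n).2 m (e j))) @ \oo --> f k (Gs n (e j)).
  by have [_ _ Pn_WOT] := P_approx n; exact: Pn_WOT (e j) _ (f_dual k).
have b_cvg j k : (fun n => f k (Gs n (e j))) @ \oo --> f k (G (e j)).
  exact: Gs_WOT (e j) _ (f_dual k).
have [mm [mm_near mm_cvg]] := diagonal_cvg Q_near a_cvg b_cvg.
exists (fun n => (P n).1 (mm n)), (fun n => (P n).2 (mm n)); split => //.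
- by move=> n; have [Pn_deriv _ _] := P_approx n; exact: Pn_deriv.
- by apply: cvg_near_seq xs_cvg _; apply: nearW => n; exact: mm_near.
Qed.

Unset Implicit Arguments.
Set Strict Implicit.

Theorem mainTheorem3
  (R : realType) (d : measure_display) (Omega : measurableType d)
  (mu : {measure set Omega -> \bar R})
  (mu_complete : measure_is_complete mu)
  (q r : \bar R) (q1 : (1 <= q)%E) (r1 : (1 <= r)%E)
  (X Y U : completeNormedModType R)
  (iotaY : Y -> Omega -> R) (iotaU : U -> X)
  (Y_sep : separable_space Y) (Y_refl : reflexive_space Y)
  (Y_emb : compact_Lq_embedding mu q iotaY)
  (X_sep : separable_space X)
  (U_refl : reflexive_space U)
  (U_emb : compact_embedding iotaU)
  (S : X -> Y)
  (S_convex : ae_convex mu iotaY S)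
  (S_lip : local_lipschitz mu r iotaY iotaU S)
  (xs : nat -> X) (x : X) (Gs : nat -> X -> Y) (G : X -> Y) :
  xs @ \oo --> x ->
  (forall n, bouligand_sw S (xs n) (Gs n)) ->
  is_bdd_linear G ->
  WOT_cvg Gs G ->
  bouligand_sw S x G.
Proof.
move=> xs_cvg Gs_bouligand G_bdd Gs_WOT.
have [C [eps [_ [eps_gt0 [S_lip_x _]]]]] := S_lip x.
have [f [f_dual f_le f_sep]] := separating_dual_seq Y_sep.
have [e e_dense] := separable_dense_seq X_sep.
have [xs' [Ds' [Ds'_deriv xs'_cvg Ds'_cvg]]] :=
  bouligand_sw_diagonal e f_dual xs_cvg Gs_bouligand Gs_WOT.
split => //; exists xs', Ds'; split => //; split => // z.
have Ds'_le : \forall n \near \oo, forall w, `|Ds' n w| <= C * `|w|.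
  move/cvgrPdist_lt: xs'_cvg => /(_ _ eps_gt0); apply: filterS => n xn.
  by apply: gateaux_derivative_le S_lip_x _ (Ds'_deriv n); rewrite distrC.
apply: (weak_cvg_separating Y_refl f_dual f_sep (B := C * `|z|)).
  by apply: filterS Ds'_le => n; apply.
move=> k; apply: (@equibounded_dense_cvg _ _ _ (fun n => f k \o Ds' n) (f k \o G) e C).
- exact: e_dense.
- by move=> n; exact: is_linear_comp (f_dual k).1 (Ds'_deriv n).2.1.
- exact: is_bdd_linear_comp (f_dual k) G_bdd.
- by apply: filterS Ds'_le => n Dn w /=; exact: le_trans (f_le _ _) (Dn w).
- by move=> j; exact: Ds'_cvg j k.
Qed.
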